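(* Let $\theta:\mathbb{A}\to\mathbb{A}^\lambda$ be a primitive substitution (satisfying the standing assumptions) with $c(\theta)=1$. Then $h(\theta)=1$.
   Context: Substitution of constant length $\lambda\ge2$: $\theta:\mathbb{A}\to\mathbb{A}^\lambda$, $\theta(a)=\theta(a)_0\cdots\theta(a)_{\lambda-1}$, extended by concatenation, $\theta^k$ its iterates; primitive: for some $k$, every $\theta^k(a)$ contains every letter. Standing assumptions: some $a_0$ has $\theta(a_0)_0=a_0$, $\theta$ injective on letters, the subshift $X_\theta$ infinite; $u$ is the fixed point $\theta(u)=u$ with $u[0]=a_0$. For $k\ge0$, $S_k=\{r\ge1:u[k+r]=u[k]\}$ and $g_k=\gcd S_k$; height $h(\theta)=\max\{m\ge1:\gcd(m,\lambda)=1,\ m\mid g_0\}$ (it also equals $\max\{m:\gcd(m,\lambda)=1, m\mid g_k\}$ for each $k$). Column number $c(\theta)=\min_{k\ge1,\,0\le j<\lambda^k}|\{\theta^k(a)_j:a\in\mathbb{A}\}|$. *)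

From HB Require Import structures.
From mathcomp Require Import all_boot all_order all_algebra.
From Stdlib Require List.
Set Implicit Arguments.
Unset Strict Implicit.
Unset Printing Implicit Defensive.

Section Subst.
Variables (A : finType) (lam : nat) (theta : A -> lam.-tuple A).

Definition subst_word (w : seq A) : seq A :=
  flatten [seq (tval (theta b)) | b <- w].

Definition thetak (k : nat) (a : A) : seq A := iter k subst_word [:: a].

Definition thetak_letter (k : nat) (a : A) (j : nat) : A := nth a (thetak k a) j.

Definition primitive : Prop :=
  exists k, forall a b : A, b \in thetak k a.

Definition in_language (w : seq A) : Prop :=
  exists k a, infix w (thetak k a).

Definition in_subshift (x : int -> A) : Prop :=
  forall (i : int) (n : nat), in_language [seq x (i + (j%:Z))%R | j <- iota 0 n].

Definition subshift_infinite : Prop :=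
  forall s : seq (int -> A),
    exists x, in_subshift x /\ forall y, List.In y s -> exists i, x i <> y i.

(* the fixed point u = theta(u) starting with a0: u[n] = theta^{n+1}(a0)_n *)
Definition fixed_point (a0 : A) (n : nat) : A := thetak_letter n.+1 a0 n.

Definition return_set (a0 : A) (k : nat) : pred nat :=
  fun r => (1 <= r) && (fixed_point a0 (k + r) == fixed_point a0 k).

Definition standing_assumptions (a0 : A) : Prop :=
  [/\ 2 <= lam, thetak_letter 1 a0 0 = a0, injective theta & subshift_infinite].

End Subst.

Definition is_gcd_of (P : pred nat) (g : nat) : Prop :=
  (forall r, P r -> g %| r) /\ (forall e, (forall r, P r -> e %| r) -> e %| g).

Definition is_max_of (Q : nat -> Prop) (m : nat) : Prop :=
  Q m /\ forall n, Q n -> n <= m.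

Definition is_min_of (Q : nat -> Prop) (m : nat) : Prop :=
  Q m /\ forall n, Q n -> m <= n.

Definition is_height (A : finType) (lam : nat) (theta : A -> lam.-tuple A)
    (a0 : A) (h : nat) : Prop :=
  exists g, is_gcd_of (return_set theta a0 0) g /\
    is_max_of (fun m => 1 <= m /\ coprime m lam /\ m %| g) h.

Definition is_column_number (A : finType) (lam : nat) (theta : A -> lam.-tuple A)
    (c : nat) : Prop :=
  is_min_of (fun n => exists k j, 1 <= k /\ j < lam ^ k /\
                n = #|[set thetak_letter theta k a j | a : A]|) c.

(* If column j of theta^k is the constant letter x, choose t with theta^K(x)_t = a0
   (primitivity).  The self-similarity u[q lam^n + i] = theta^n(u[q])_i of the fixed
   point then gives u[(q lam^k + j) lam^K + t] = a0 for every q >= 1, so the return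
   set S_0 contains two elements differing by lam^(k+K).  Any m dividing g_0 divides
   lam^(k+K); if also gcd(m, lam) = 1 then m = 1. *)
From HB Require Import structures.
From mathcomp Require Import all_boot all_order all_algebra.
From mathcomp Require Import zify.
From Stdlib Require Import Classical.

Set Implicit Arguments.
Unset Strict Implicit.
Unset Printing Implicit Defensive.

Section SubstWords.
Variables (A : finType) (lam : nat) (theta : A -> lam.-tuple A).

Lemma subst_word_cat s1 s2 :
  subst_word theta (s1 ++ s2) = subst_word theta s1 ++ subst_word theta s2.
Proof. by rewrite /subst_word map_cat flatten_cat. Qed.

Lemma iter_subst_word k w :
  iter k (subst_word theta) w = flatten [seq thetak theta k b | b <- w].
Proof.
elim: k w => [|k IHk] w /=; first by elim: w => //= b w <-.
rewrite IHk /thetak /=; elim: w => //= b w IHw.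
by rewrite subst_word_cat IHw.
Qed.

Lemma thetakD k2 k1 a :
  thetak theta (k2 + k1) a = flatten [seq thetak theta k2 b | b <- thetak theta k1 a].
Proof. by rewrite /thetak iterD iter_subst_word. Qed.

Lemma size_flatten_const (f : A -> seq A) L s :
  (forall b, size (f b) = L) -> size (flatten [seq f b | b <- s]) = L * size s.
Proof.
move=> sizef; elim: s => [|b s IHs] /=; first by rewrite muln0.
by rewrite size_cat IHs sizef mulnS.
Qed.

Lemma size_thetak k a : size (thetak theta k a) = lam ^ k.
Proof.
elim: k a => // k IHk a; rewrite -addn1 thetakD (@size_flatten_const _ (lam ^ k)) //.
by rewrite /thetak /= /subst_word /= cats0 size_tuple addn1 expnS mulnC.
Qed.

Lemma nth_flatten_const (f : A -> seq A) L s q j x0 y0 :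
  (forall b, size (f b) = L) -> j < L -> q < size s ->
  nth x0 (flatten [seq f b | b <- s]) (q * L + j) = nth x0 (f (nth y0 s q)) j.
Proof.
move=> sizef jL; elim: s q => [|b s IHs] [|q] //= qs; first by rewrite nth_cat sizef jL.
by rewrite nth_cat sizef mulSn -addnA ltnNge leq_addr /= addKn IHs.
Qed.

Lemma nth_thetakD k2 k1 a q j x0 : j < lam ^ k2 -> q < lam ^ k1 ->
  nth x0 (thetak theta (k2 + k1) a) (q * lam ^ k2 + j) =
  nth x0 (thetak theta k2 (nth x0 (thetak theta k1 a) q)) j.
Proof.
move=> jk2 qk1; rewrite thetakD (@nth_flatten_const _ (lam ^ k2) _ _ _ _ x0) ?size_thetak //.
exact: size_thetak.
Qed.

End SubstWords.

Section FixedPoint.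
Variables (A : finType) (lam : nat) (theta : A -> lam.-tuple A) (a0 : A).
Hypothesis lam_gt1 : 1 < lam.
Hypothesis theta_a0 : thetak_letter theta 1 a0 0 = a0.

Let lam_gt0 : 0 < lam. Proof. exact: ltnW lam_gt1. Qed.

Lemma fixed_point0 : fixed_point theta a0 0 = a0.
Proof. exact: theta_a0. Qed.

Lemma nth_thetak0 d : nth a0 (thetak theta d a0) 0 = a0.
Proof.
elim: d => // d IHd.
have := @nth_thetakD _ _ theta 1 d a0 0 0 a0.
rewrite !expn_gt0 lam_gt0 mul0n IHd add1n => /(_ isT isT) ->.
exact: theta_a0.
Qed.

Lemma nth_thetak_prefix K d n : n < lam ^ K ->
  nth a0 (thetak theta (K + d) a0) n = nth a0 (thetak theta K a0) n.
Proof.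
move=> nK; have := @nth_thetakD _ _ theta K d a0 0 n a0 nK.
by rewrite mul0n add0n nth_thetak0 expn_gt0 lam_gt0 => ->.
Qed.

Lemma fixed_point_thetak K n : n < lam ^ K ->
  fixed_point theta a0 n = nth a0 (thetak theta K a0) n.
Proof.
move=> nK; rewrite /fixed_point /thetak_letter -(nth_thetak_prefix (K := K) n.+1) //.
by rewrite addnC nth_thetak_prefix // ltnW // ltn_expl.
Qed.

Lemma fixed_point_block n q i : i < lam ^ n ->
  fixed_point theta a0 (q * lam ^ n + i) = thetak_letter theta n (fixed_point theta a0 q) i.
Proof.
move=> in_lt; have qd : q < lam ^ q.+1 by rewrite ltnW // ltn_expl.
rewrite (fixed_point_thetak (K := n + q.+1)); last first.
  by rewrite expnD; nia.
rewrite nth_thetakD // -fixed_point_thetak //.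
by rewrite /thetak_letter (set_nth_default (fixed_point theta a0 q)) ?size_thetak.
Qed.

Lemma return_set_constant_column k j K t x : j < lam ^ k -> t < lam ^ K ->
  (forall a, thetak_letter theta k a j = x) -> thetak_letter theta K x t = a0 ->
  forall q, 0 < q -> return_set theta a0 0 ((q * lam ^ k + j) * lam ^ K + t).
Proof.
move=> jk tK column xt q q_gt0; apply/andP; split.
  by rewrite addn_gt0 muln_gt0 addn_gt0 muln_gt0 q_gt0 !expn_gt0 lam_gt0.
by rewrite !fixed_point_block // column xt fixed_point0.
Qed.

End FixedPoint.

Lemma ex_max_bounded (Q : nat -> Prop) n0 B :
  Q n0 -> (forall n, Q n -> n <= B) -> exists m, is_max_of Q m.
Proof.
move=> Qn0; elim: B => [|B IHB] QB.
  by exists n0; split=> // n /QB; rewrite leqn0 => /eqP ->.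
have [QB1 | nQB1] := classic (Q B.+1); first by exists B.+1.
apply: IHB => n Qn; rewrite -ltnS ltn_neqAle QB // andbT.
by apply/eqP=> nB; apply: nQB1; rewrite -nB.
Qed.

(* the largest common divisor d is the gcd: for a common divisor e, lcm(d, e) is a
   common divisor at least d *)
Lemma gcd_of_exists (S : pred nat) p : 0 < p -> S p -> exists g, is_gcd_of S g.
Proof.
move=> p_gt0 Sp; pose common_div d := forall r, S r -> d %| r.
have [d [dvd_d d_max]] : exists d, is_max_of common_div d.
  by apply: (@ex_max_bounded _ 1 p) => [r _ | n /(_ p Sp)]; [exact: dvd1n | exact: dvdn_leq].
exists d; split=> // e dvd_e.
have lcm_div : common_div (lcmn d e) by move=> r Sr; rewrite dvdn_lcm dvd_d ?dvd_e.
have lcm_gt0 : 0 < lcmn d e by exact: dvdn_gt0 p_gt0 (lcm_div p Sp).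
have -> : d = lcmn d e.
  by apply/eqP; rewrite eqn_leq d_max // dvdn_leq // dvdn_lcml.
exact: dvdn_lcmr.
Qed.

Lemma is_gcd_of_coprime (S : pred nat) g lam n r m :
  is_gcd_of S g -> S r -> S (r + lam ^ n) -> coprime m lam -> m %| g -> m = 1.
Proof.
move=> [g_dvd _] Sr Srl m_lam m_g.
have m_r := dvdn_trans m_g (g_dvd _ Sr).
have := dvdn_trans m_g (g_dvd _ Srl); rewrite dvdn_addr // => m_lamn.
by apply/eqP; rewrite -(gcdn_idPl m_lamn); exact: coprimeXr.
Qed.

Theorem mainTheorem5 (A : finType) (lam : nat) (theta : A -> lam.-tuple A) (a0 : A) :
  standing_assumptions theta a0 ->
  primitive theta ->
  is_column_number theta 1 ->
  is_height theta a0 1.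
Proof.
move=> [lam_gt1 theta_a0 _ _] [K prim] [[k [j [_ [jk col1]]]] _].
have /cards1P [x col_x] : #|[set thetak_letter theta k a j | a : A]| == 1 by rewrite -col1.
have column a : thetak_letter theta k a j = x by apply/set1P; rewrite -col_x imset_f.
pose t := index a0 (thetak theta K x).
have tK : t < lam ^ K by rewrite -(size_thetak theta K x) index_mem.
have xt : thetak_letter theta K x t = a0 by rewrite /thetak_letter nth_index.
have S_ret := return_set_constant_column lam_gt1 theta_a0 jk tK column xt.
pose r := (1 * lam ^ k + j) * lam ^ K + t.
have Sr : return_set theta a0 0 r by exact: S_ret 1 isT.
have Srl : return_set theta a0 0 (r + lam ^ (k + K)).
  by have := S_ret 2 isT; rewrite /r expnD; congr (return_set _ _ _ _); nia.
have [g g_gcd] := gcd_of_exists (andP Sr).1 Sr.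
exists g; split=> //; split; first by rewrite coprime1n dvd1n.
by move=> m [_ [m_lam m_g]]; rewrite (is_gcd_of_coprime g_gcd Sr Srl m_lam m_g).
Qed.
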